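(* Let $s$ be a Sturmian word of type $a$ having a factorization $s=U_1U_2\cdots U_n\cdots$ where each $U_i$ ($i\ge1$) is a non-empty prefix of $s$ and $r_s(U_i)=r_s(U_j)$ for all $i,j\ge1$. Then at least one of the following holds: (i) every $U_i$, $i\ge1$, ends in the letter $a$; (ii) for every $i\ge1$, $U_ia$ is a prefix of $s$.
   Context: A Sturmian word is an infinite word $s\in\{a,b\}^{\omega}$ that is aperiodic (not ultimately periodic) and balanced: for all factors $u,v$ of $s$ with $|u|=|v|$ one has $||u|_x-|v|_x|\le 1$ for $x\in\{a,b\}$, where $|u|_x$ is the number of occurrences of $x$ in $u$. A Sturmian word contains exactly one of the factors $aa$, $bb$; it is of type $a$ if it does not contain the factor $bb$ (and of type $b$ if it does not contain $aa$). A non-empty factor $w$ of $s$ is rich in the letter $z\in\{a,b\}$ if there is a factor $v$ of $s$ with $|v|=|w|$ and $|w|_z>|v|_z$; every non-empty factor of a Sturmian word is rich in exactly one letter, and $r_s(w)\in\{a,b\}$ denotes that letter. *)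

From Stdlib Require Import Arith List Lia ClassicalEpsilon.
Import ListNotations.

Inductive letter : Type := a | b.

Definition letter_eqb (x y : letter) : bool :=
  match x, y with a, a => true | b, b => true | _, _ => false end.

Definition word := nat -> letter.

Definition fac (s : word) (i n : nat) : list letter := map (fun k => s (i + k)) (seq 0 n).

Definition is_factor (s : word) (w : list letter) : Prop := exists i, w = fac s i (length w).

Definition is_prefix (s : word) (w : list letter) : Prop := w = fac s 0 (length w).

Definition cnt (x : letter) (w : list letter) : nat := length (filter (letter_eqb x) w).

Definition ult_periodic (s : word) : Prop :=
  exists p N, 0 < p /\ forall n, N <= n -> s (n + p) = s n.

Definition balanced (s : word) : Prop :=
  forall u v, is_factor s u -> is_factor s v -> length u = length v ->
    forall x, cnt x u <= cnt x v + 1 /\ cnt x v <= cnt x u + 1.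

Definition sturmian (s : word) : Prop := ~ ult_periodic s /\ balanced s.

Definition type_a (s : word) : Prop := ~ is_factor s [b; b].

Definition rich (s : word) (z : letter) (w : list letter) : Prop :=
  w <> [] /\ is_factor s w /\
  exists v, is_factor s v /\ length v = length w /\ cnt z v < cnt z w.

(* r_s(w): the letter in which w is rich (exactly one for Sturmian s, nonempty factor w) *)
Definition r_s (s : word) (w : list letter) : letter :=
  if excluded_middle_informative (rich s a w) then a else b.

Fixpoint upos (U : nat -> list letter) (k : nat) : nat :=
  match k with 0 => 0 | S k' => upos U k' + length (U k') end.

Definition factorization (s : word) (U : nat -> list letter) : Prop :=
  forall k, U k <> [] /\ U k = fac s (upos U k) (length (U k)).

From Stdlib Require Import List Arith Lia ClassicalEpsilon.
Import ListNotations.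

(* Since every block U_k is a prefix of s, every block starts
   with the letter s(0), and the block boundaries are positions where s
   "restarts".
   - If s(0) = b, each block is followed by a block starting with b; as s has
     no factor bb, each block ends with a  (alternative (i)).
   - If s(0) = a, suppose some block U_j of length n is followed in s by b,
     i.e. s(n) = b.  Then s[1..n] has one a fewer than s[0..n-1] = U_j, so
     U_j is rich in a, hence (r_s being constant) every block is rich in a.
     By balance a block rich in a has the maximal number of a's among factors
     of its length, and a maximal factor w at position P forces
     s[P+|w|..] >= s[P..] lexicographically (with a < b).  Chaining over the
     blocks gives s[upos j..] >= s, contradicted by s[upos j..] agreeing with
     s on n letters and then reading a where s reads b  (alternative (ii)). *)

Lemma map_seq_shift (A : Type) (m : nat) : forall n (f : nat -> A),
  map f (seq n m) = map (fun k => f (n + k)) (seq 0 m).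
Proof.
  induction m as [|m IH]; intros n f; simpl; [reflexivity|].
  rewrite Nat.add_0_r. f_equal.
  rewrite (IH (S n) f), (IH 1 (fun k => f (n + k))).
  apply map_ext. intros k. f_equal. lia.
Qed.

Lemma fac_length s i n : length (fac s i n) = n.
Proof. unfold fac. rewrite length_map, length_seq. reflexivity. Qed.

Lemma fac_add s i n m : fac s i (n + m) = fac s i n ++ fac s (i + n) m.
Proof.
  unfold fac. rewrite seq_app, map_app. f_equal. simpl.
  rewrite map_seq_shift. apply map_ext. intros k. f_equal. lia.
Qed.

Lemma fac_snoc s i n : fac s i (S n) = fac s i n ++ [s (i + n)].
Proof.
  rewrite <- Nat.add_1_r, fac_add. unfold fac at 2. simpl. rewrite Nat.add_0_r. reflexivity.
Qed.

Lemma fac_nth s i n e : e < n -> nth e (fac s i n) a = s (i + e).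
Proof.
  intros He. unfold fac.
  rewrite (nth_indep _ a (s (i + 0))) by (rewrite length_map, length_seq; exact He).
  rewrite (map_nth (fun k => s (i + k))), seq_nth by exact He. reflexivity.
Qed.

Lemma fac_agree s p q d :
  (forall e, e < d -> s (p + e) = s (q + e)) -> fac s p d = fac s q d.
Proof.
  intros H. unfold fac. apply map_ext_in. intros k Hk. apply in_seq in Hk. apply H. lia.
Qed.

Lemma fac_is_factor s i n : is_factor s (fac s i n).
Proof. exists i. rewrite fac_length. reflexivity. Qed.

Lemma prefix_snoc s w : is_prefix s w -> is_prefix s (w ++ [s (length w)]).
Proof.
  unfold is_prefix. intros Hw. rewrite length_app, Nat.add_1_r, fac_snoc, <- Hw.
  reflexivity.
Qed.

Lemma cnt_app x l1 l2 : cnt x (l1 ++ l2) = cnt x l1 + cnt x l2.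
Proof. unfold cnt. rewrite filter_app, length_app. reflexivity. Qed.

Definition acount (s : word) (i n : nat) : nat := cnt a (fac s i n).

Lemma acount_add s i n m : acount s i (n + m) = acount s i n + acount s (i + n) m.
Proof. unfold acount. rewrite fac_add, cnt_app. reflexivity. Qed.

Lemma acount_one s i : acount s i 1 = if s i then 1 else 0.
Proof. unfold acount, fac. simpl. rewrite Nat.add_0_r. destruct (s i); reflexivity. Qed.

Lemma acount_shift s i n :
  acount s i n + (if s (i + n) then 1 else 0) = (if s i then 1 else 0) + acount s (S i) n.
Proof.
  rewrite <- (acount_one s (i + n)), <- (acount_one s i), <- acount_add.
  replace (S i) with (i + 1) by lia. rewrite <- acount_add. f_equal. lia.
Qed.

Definition lex_lt (t u : word) : Prop :=
  exists d, (forall e, e < d -> t e = u e) /\ t d = a /\ u d = b.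

Lemma letter_dec (x y : letter) : {x = y} + {x <> y}.
Proof. decide equality. Defined.

Lemma first_diff (t u : word) d :
  (forall e, e <= d -> t e = u e) \/
  exists e, e <= d /\ (forall e', e' < e -> t e' = u e') /\ t e <> u e.
Proof.
  induction d as [|d IH].
  - destruct (letter_dec (t 0) (u 0)) as [E|E].
    + left. intros e He. replace e with 0 by lia. exact E.
    + right. exists 0. repeat split; [lia|intros; lia|exact E].
  - destruct IH as [H|[e [He [H1 H2]]]].
    + destruct (letter_dec (t (S d)) (u (S d))) as [E|E].
      * left. intros e He. destruct (Nat.eq_dec e (S d)) as [->|Hn]; [exact E|apply H; lia].
      * right. exists (S d). repeat split; [lia|intros; apply H; lia|exact E].
    + right. exists e. split; [lia|auto].
Qed.

Lemma lex_lt_split (t u w : word) : lex_lt t u -> lex_lt t w \/ lex_lt w u.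
Proof.
  intros [d [Hag [Ht Hu]]].
  destruct (first_diff w u d) as [H|[e [He [Hb Hne]]]].
  - left. exists d. split; [intros e He; rewrite Hag, H by lia; reflexivity|].
    split; [exact Ht|rewrite H by lia; exact Hu].
  - destruct (w e) eqn:Ew, (u e) eqn:Eu; try congruence.
    + right. exists e. auto.
    + assert (e < d) by (destruct (Nat.eq_dec e d); [subst; congruence|lia]).
      left. exists e. split.
      * intros e' He'. rewrite Hag, Hb by lia. reflexivity.
      * split; [rewrite Hag by lia; exact Eu|exact Ew].
Qed.

Lemma r_s_a s w : r_s s w = a <-> rich s a w.
Proof.
  unfold r_s. destruct (excluded_middle_informative (rich s a w)); split;
    (discriminate || tauto).
Qed.

Lemma rich_a_maximal s P n :
  balanced s -> rich s a (fac s P n) -> forall i, acount s i n <= acount s P n.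
Proof.
  intros Hbal [_ [_ [v [Hv [Hlv Hlt]]]]] i.
  rewrite fac_length in Hlv.
  destruct (Hbal (fac s i n) v (fac_is_factor s i n) Hv) with (x := a) as [Hle _].
  { rewrite fac_length. symmetry. exact Hlv. }
  unfold acount. lia.
Qed.

(* If the factor of length n at P has the maximal number of a's, then the
   suffix starting right after it is not lexicographically smaller than the
   suffix starting at P: otherwise the window at the first difference d
   (shifted by d+1) would carry one more a. *)
Lemma maximal_factor_suffix s P n :
  (forall i, acount s i n <= acount s P n) ->
  ~ lex_lt (fun e => s (P + n + e)) (fun e => s (P + e)).
Proof.
  intros Hmax [d [Hag [Ha Hb]]].
  assert (Hswap : acount s P (n + (d + 1)) = acount s P ((d + 1) + n)) by (f_equal; lia).
  rewrite !acount_add, !acount_one, Ha, Hb in Hswap.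
  assert (Hsame : acount s (P + n) d = acount s P d) by (apply (f_equal (cnt a)), fac_agree, Hag).
  pose proof (Hmax (P + (d + 1))). lia.
Qed.

(* A prefix starting with a and followed by b is rich in a:
   shifting it by one position loses an a. *)
Lemma prefix_before_b_rich s n :
  0 < n -> s 0 = a -> s n = b -> rich s a (fac s 0 n).
Proof.
  intros Hn H0 Hb. split; [|split].
  - intros E. apply (f_equal (@length letter)) in E. rewrite fac_length in E. simpl in E. lia.
  - apply fac_is_factor.
  - exists (fac s 1 n). split; [apply fac_is_factor|]. split; [rewrite !fac_length; reflexivity|].
    pose proof (acount_shift s 0 n) as E. simpl in E. rewrite H0, Hb in E.
    unfold acount in E. lia.
Qed.

Section PrefixFactorization.

Variable s : word.
Variable U : nat -> list letter.
Hypothesis Hfac : factorization s U.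
Hypothesis Hpre : forall i, is_prefix s (U i).

Lemma block_nonempty k : 0 < length (U k).
Proof. destruct (Hfac k) as [Hne _]. destruct (U k); simpl; [congruence|lia]. Qed.

Lemma block_fac k : U k = fac s (upos U k) (length (U k)).
Proof. exact (proj2 (Hfac k)). Qed.

Lemma block_agrees k e : e < length (U k) -> s (upos U k + e) = s e.
Proof.
  intros He.
  rewrite <- fac_nth with (n := length (U k)), <- block_fac by exact He.
  rewrite (Hpre k), fac_nth by exact He. reflexivity.
Qed.

Lemma block_start k : s (upos U k) = s 0.
Proof. rewrite <- (Nat.add_0_r (upos U k)). apply block_agrees, block_nonempty. Qed.

(* Case s(0) = b: each block is followed by a b, so, without bb, ends in a. *)
Lemma blocks_end_in_a :
  type_a s -> s 0 = b -> forall i, last (U i) a = a.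
Proof.
  intros Hta H0 i.
  pose proof (block_nonempty i) as Hl.
  rewrite block_fac. destruct (length (U i)) as [|m] eqn:Em; [lia|].
  rewrite fac_snoc, last_last.
  destruct (s (upos U i + m)) eqn:Es; [reflexivity|exfalso].
  apply Hta. exists (upos U i + m). unfold fac. simpl. rewrite Nat.add_0_r, Es.
  replace (upos U i + m + 1) with (upos U (S i)) by (simpl; lia).
  rewrite block_start, H0. reflexivity.
Qed.

Lemma rich_blocks_suffix :
  balanced s -> (forall k, rich s a (U k)) ->
  forall k, ~ lex_lt (fun e => s (upos U k + e)) s.
Proof.
  intros Hbal Hrich. induction k as [|k IHk].
  - intros [d [_ [H1 H2]]]. simpl in H1. congruence.
  - intros Hlt.
    destruct (lex_lt_split _ _ (fun e => s (upos U k + e)) Hlt) as [Hstep|Hprev].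
    + apply (maximal_factor_suffix s (upos U k) (length (U k))); [|exact Hstep].
      apply rich_a_maximal; [exact Hbal|]. rewrite <- block_fac. apply Hrich.
    + exact (IHk Hprev).
Qed.

Lemma blocks_followed_by_a :
  balanced s -> (forall i j, r_s s (U i) = r_s s (U j)) -> s 0 = a ->
  forall j, s (length (U j)) = a.
Proof.
  intros Hbal Hr H0 j.
  destruct (s (length (U j))) eqn:Eb; [reflexivity|exfalso].
  assert (Hrich : forall k, rich s a (U k)).
  { intros k. apply r_s_a. rewrite (Hr k j). apply r_s_a. rewrite (Hpre j).
    apply prefix_before_b_rich; auto using block_nonempty. }
  apply (rich_blocks_suffix Hbal Hrich j). exists (length (U j)). repeat split.
  - apply block_agrees.
  - change (s (upos U (S j)) = a). rewrite block_start. exact H0.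
  - exact Eb.
Qed.

End PrefixFactorization.

(* The paper's U_1, U_2, ... are U 0, U 1, ... here. *)
Theorem mainTheorem5 (s : word) (U : nat -> list letter) :
  sturmian s -> type_a s ->
  factorization s U ->
  (forall i, is_prefix s (U i)) ->
  (forall i j, r_s s (U i) = r_s s (U j)) ->
  (forall i, last (U i) a = a) \/ (forall i, is_prefix s (U i ++ [a])).
Proof.
  intros [_ Hbal] Hta Hfac Hpre Hr.
  destruct (s 0) eqn:H0.
  - right. intros i. rewrite <- (blocks_followed_by_a s U Hfac Hpre Hbal Hr H0 i).
    apply prefix_snoc, Hpre.
  - left. exact (blocks_end_in_a s U Hfac Hpre Hta H0).
Qed.
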